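(* Let $R$ be a commutative noetherian local ring and let $M$ be a right bounded $R$-complex with $\operatorname{depth}_R M_i\ge \operatorname{depth}R$ for all $i$. If $\operatorname{depth}_R \mathrm{H}_i(M)\ge \operatorname{depth}R-1$ for all $i$, then $\operatorname{depth}_R \mathrm{Z}_i(M)\ge\operatorname{depth}R$ and $\operatorname{depth}_R\mathrm{B}_i(M)\ge\operatorname{depth}R$ for all $i$.
   Context: For an $R$-complex $M$ with differential $\partial$: $\mathrm{Z}_i(M)=\ker\partial_i$, $\mathrm{B}_i(M)=\operatorname{im}\partial_{i+1}$, $\mathrm{H}_i(M)=\mathrm{Z}_i(M)/\mathrm{B}_i(M)$. By convention the depth of the zero module is $+\infty$. *)

From HB Require Import structures.
From mathcomp Require Import all_boot all_order all_algebra.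
Set Implicit Arguments. Unset Strict Implicit. Unset Printing Implicit Defensive.
Import Order.TTheory GRing.Theory Num.Theory.
Local Open Scope ring_scope.

Section CommAlg.
Variable R : comUnitRingType.

Definition is_ideal (I : {pred R}) : Prop :=
  0 \in I /\ (forall a b, a \in I -> b \in I -> a + b \in I) /\
  (forall r a, a \in I -> r * a \in I).

Definition noetherian : Prop :=
  forall I : {pred R}, is_ideal I ->
    exists (n : nat) (g : 'I_n -> R),
      forall r, r \in I <-> exists c : 'I_n -> R, r = \sum_(k < n) c k * g k.

Definition local_ring : Prop :=
  is_ideal [pred r : R | r \isn't a GRing.unit].

Definition generates_max (n : nat) (x : 'I_n -> R) : Prop :=
  forall r : R, r \isn't a GRing.unit <->
    exists c : 'I_n -> R, r = \sum_(k < n) c k * x k.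

(** Koszul complex K(x; V): a chain is a function f : {set 'I_n} -> V,
    f S being the coefficient of e_S; degree-i chains are supported on
    sets of size i. Differential:
    e_S |-> sum_{j in S} (-1)^{#{k in S | k < j}} x_j e_{S \ j}. *)
Definition kdiff (V : lmodType R) (n : nat) (x : 'I_n -> R)
    (f : {set 'I_n} -> V) (T : {set 'I_n}) : V :=
  \sum_(j < n | j \notin T)
     (((-1) ^+ #|[set k in T | (k < j)%N]| * x j) *: f (j |: T)).

(** H_i(x; A/B) = 0, where B <= A <= V are submodules, i.e. the i-th
    Koszul homology of the subquotient module A/B vanishes. *)
Definition koszul_vanish (V : lmodType R) (n : nat) (x : 'I_n -> R)
    (A B : V -> Prop) (i : nat) : Prop :=
  forall f : {set 'I_n} -> V,
    (forall S : {set 'I_n}, A (f S)) -> (forall S : {set 'I_n}, #|S| != i -> f S = 0) ->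
    (forall T : {set 'I_n}, B (kdiff x f T)) ->
    exists g : {set 'I_n} -> V,
      (forall S : {set 'I_n}, A (g S)) /\ (forall S : {set 'I_n}, #|S| != i.+1 -> g S = 0) /\
      (forall S : {set 'I_n}, B (f S - kdiff x g S)).

(** depth_R (A/B) >= d, with depth defined through Koszul homology on a
    generating sequence x_1..x_n of m:
      depth N = n - sup { i | H_i(x; N) <> 0 }   (= +oo if all vanish). *)
Definition depth_ge (V : lmodType R) (n : nat) (x : 'I_n -> R)
    (A B : V -> Prop) (d : int) : Prop :=
  forall i : nat, (n%:Z - d < i%:Z) -> koszul_vanish x A B i.

Definition mod_depth_ge (V : lmodType R) (n : nat) (x : 'I_n -> R) (d : int) :=
  depth_ge x (fun _ : V => True) (fun v : V => v = 0) d.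

Definition ring_depth_eq (n : nat) (x : 'I_n -> R) (d : nat) : Prop :=
  @mod_depth_ge R^o n x d%:Z /\ ~ @mod_depth_ge R^o n x d.+1%:Z.

Definition castM (M : int -> lmodType R) (i j : int) (e : i = j) (m : M i) : M j :=
  ecast k (M k) e m.

Definition is_complex (M : int -> lmodType R)
    (d : forall i : int, {linear M i -> M (i - 1)}) : Prop :=
  forall (i : int) (m : M i), d (i - 1) (d i m) = 0.

Definition right_bounded (M : int -> lmodType R) : Prop :=
  exists n0 : int, forall i : int, i < n0 -> forall m : M i, m = 0.

Definition cycles (M : int -> lmodType R)
    (d : forall i : int, {linear M i -> M (i - 1)}) (i : int) : M i -> Prop :=
  fun m => d i m = 0.

Definition boundaries (M : int -> lmodType R)
    (d : forall i : int, {linear M i -> M (i - 1)}) (i : int) : M i -> Prop :=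
  fun m => exists y : M (i + 1), castM (addrK 1 i) (d (i + 1) y) = m.

End CommAlg.

Arguments cycles {R M} d i _.
Arguments boundaries {R M} d i _.

From HB Require Import structures.
From mathcomp Require Import all_boot all_order all_algebra.
From mathcomp Require Import zify ring.
From Stdlib Require Import ClassicalEpsilon.
Import Order.TTheory GRing.Theory Num.Theory.
Local Open Scope ring_scope.

Set Implicit Arguments. Unset Strict Implicit.

(* The short
   exact sequences 0 -> Z_i -> M_i -> B_(i-1) -> 0 and 0 -> B_i -> Z_i -> H_i -> 0
   give, through the long exact sequences of Koszul homology,
     depth Z_i >= min (depth M_i, depth B_(i-1) + 1),
     depth B_i >= min (depth Z_i, depth H_i + 1),
   so depth B_(i-1) >= depth R forces depth Z_i >= depth R and then
   depth B_i >= depth R. As B_i = 0 for i << 0, induction on i concludes. *)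

Section KoszulComplex.
Variables (R : comUnitRingType) (n : nat) (x : 'I_n -> R).

Lemma eq_kdiff (V : lmodType R) (f g : {set 'I_n} -> V) :
  (forall S : {set 'I_n}, f S = g S) -> forall T : {set 'I_n}, kdiff x f T = kdiff x g T.
Proof. by move=> efg T; apply: eq_bigr => j _; rewrite efg. Qed.

Lemma kdiffB (V : lmodType R) (f g : {set 'I_n} -> V) T :
  kdiff x (fun S => f S - g S) T = kdiff x f T - kdiff x g T.
Proof. by rewrite /kdiff -sumrB; apply: eq_bigr => j _; rewrite scalerBr. Qed.

Lemma linear_kdiff (U V : lmodType R) (L : {linear U -> V}) f T :
  L (kdiff x f T) = kdiff x (fun S => L (f S)) T.
Proof. by rewrite /kdiff raddf_sum; apply: eq_bigr => j _; exact: linearZ. Qed.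

Lemma kdiff_degree (V : lmodType R) (f : {set 'I_n} -> V) k :
  (forall S : {set 'I_n}, #|S| != k.+1 -> f S = 0) ->
  forall T : {set 'I_n}, #|T| != k -> kdiff x f T = 0.
Proof.
move=> f_deg T T_deg; rewrite /kdiff big1 // => j jT.
by rewrite f_deg ?scaler0 // cardsU1 jT add1n eqSS.
Qed.

Definition kcoef (T : {set 'I_n}) (j : 'I_n) : R :=
  (-1) ^+ #|[set k in T | (k < j)%N]| * x j.

Lemma card_ltU1 (j l : 'I_n) (T : {set 'I_n}) : j \notin T ->
  #|[set k in j |: T | (k < l)%N]| = ((j < l)%N + #|[set k in T | (k < l)%N]|)%N.
Proof.
move=> jT.
have -> : [set k in j |: T | (k < l)%N] =
    if (j < l)%N then j |: [set k in T | (k < l)%N] else [set k in T | (k < l)%N].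
  apply/setP => k; case: ifP => jl; rewrite !inE;
    by case: (eqVneq k j) => [->|] /=; rewrite ?jl ?andbF.
by case: ifP => // _; rewrite cardsU1 inE (negbTE jT).
Qed.

Lemma kcoef_swap (j l : 'I_n) (T : {set 'I_n}) : j \notin T -> l \notin T -> j != l ->
  kcoef T j * kcoef (j |: T) l = - (kcoef T l * kcoef (l |: T) j).
Proof.
move=> jT lT jl; rewrite /kcoef !card_ltU1 // !exprD.
case: (ltngtP j l) => [_|_|/val_inj eq_jl]; last by rewrite eq_jl eqxx in jl.
all: by rewrite expr1 expr0; ring.
Qed.

Lemma sum_antisym_eq0 (V : zmodType) m (G : 'I_m -> 'I_m -> V) :
  (forall j, G j j = 0) -> (forall j l, G l j = - G j l) ->
  \sum_j \sum_l G j l = 0.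
Proof.
move=> G_diag G_anti.
have G_split j l :
    G j l = (if (l < j)%N then G j l else 0) + (if (j < l)%N then G j l else 0).
  by case: (ltngtP l j) => [||/val_inj ->]; rewrite ?addr0 ?add0r ?G_diag.
under eq_bigr => j _ do under eq_bigr => l _ do rewrite G_split.
under eq_bigr => j _ do rewrite big_split.
rewrite big_split /= [X in X + _]exchange_big /= -big_split.
apply: big1 => j _; rewrite -big_split; apply: big1 => l _ /=.
by rewrite (G_anti j l); case: ifP; rewrite ?addNr ?addr0.
Qed.

(* The terms of d(d e_T) indexed by (j, l) and (l, j) cancel by [kcoef_swap]. *)
Lemma kdiff_kdiff (V : lmodType R) (f : {set 'I_n} -> V) T :
  kdiff x (kdiff x f) T = 0.
Proof.
pose G j l := if (j \notin T) && (l \notin T) && (j != l) then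
  (kcoef T j * kcoef (j |: T) l) *: f (l |: (j |: T)) else 0.
transitivity (\sum_j \sum_l G j l).
  rewrite /kdiff big_mkcond; apply: eq_bigr => j _ /=; rewrite /G.
  case: ifP => jT /=; last by rewrite big1.
  rewrite scaler_sumr big_mkcond; apply: eq_bigr => l _ /=.
  rewrite in_setU1 negb_or eq_sym.
  by case: (l \notin T); case: (j != l) => //=; rewrite scalerA.
apply: sum_antisym_eq0 => [j|j l]; first by rewrite /G eqxx andbF.
rewrite /G; case jT: (j \notin T); case lT: (l \notin T);
  case: (eqVneq j l) => [->|jl]; rewrite /= ?oppr0 ?eqxx ?andbF //.
by rewrite (kcoef_swap lT jT) 1?eq_sym // scaleNr setUCA.
Qed.

(* Exactness at H_k(ker L) of the long exact sequence of
   0 -> ker L -> U -> Q -> 0, where Q is the image of L. *)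
Lemma koszul_vanish_kernel (U V : lmodType R) (L : {linear U -> V}) (Q : V -> Prop) k :
  (forall u, Q (L u)) -> (forall v, Q v -> exists u, L u = v) ->
  koszul_vanish x (fun _ : U => True) (fun u => u = 0) k ->
  koszul_vanish x Q (fun v => v = 0) k.+1 ->
  koszul_vanish x (fun u => L u = 0) (fun u => u = 0) k.
Proof.
move=> Q_L L_onto U_van Q_van f Lf0 f_deg f_cyc.
have [g [_ [g_deg g_bd]]] := U_van f (fun _ => I) f_deg f_cyc.
have f_kdiff T : f T = kdiff x g T by apply: subr0_eq.
have [h [Qh [h_deg h_bd]]] : exists h : {set 'I_n} -> V,
    (forall S : {set 'I_n}, Q (h S)) /\ (forall S : {set 'I_n}, #|S| != k.+2 -> h S = 0) /\
    (forall S : {set 'I_n}, L (g S) - kdiff x h S = 0).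
  apply: (Q_van (fun S => L (g S))) => [S | S S_deg | T]; first exact: Q_L.
    by rewrite g_deg // linear0.
  by rewrite -linear_kdiff -f_kdiff Lf0.
have [h' h'P] : exists h' : {set 'I_n} -> U,
    forall S : {set 'I_n}, L (h' S) = h S /\ (#|S| != k.+2 -> h' S = 0).
  apply: (@choice _ _ (fun S u => L u = h S /\ (#|S| != k.+2 -> u = 0))) => S.
  have [_ | S_deg] := eqVneq #|S| k.+2.
    by have [u Lu] := L_onto _ (Qh S); exists u.
  by exists 0; rewrite linear0 h_deg.
exists (fun S => g S - kdiff x h' S); split; last split.
- move=> S; rewrite linearB linear_kdiff -(h_bd S).
  by congr (_ - _); apply: eq_kdiff => T; case: (h'P T).
- move=> S S_deg; rewrite g_deg // (@kdiff_degree _ _ k.+1) ?subr0 //.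
  by move=> T; case: (h'P T).
- by move=> S; rewrite kdiffB kdiff_kdiff subr0 g_bd.
Qed.

(* Exactness at H_k(B) of the long exact sequence of 0 -> B -> Z -> Z/B -> 0. *)
Lemma koszul_vanish_sub (V : lmodType R) (B Z : V -> Prop) k :
  (forall v, B v -> Z v) ->
  koszul_vanish x Z (fun v => v = 0) k ->
  koszul_vanish x Z B k.+1 ->
  koszul_vanish x B (fun v => v = 0) k.
Proof.
move=> BZ Z_van ZB_van f Bf f_deg f_cyc.
have [g [Zg [g_deg g_bd]]] := Z_van f (fun S => BZ _ (Bf S)) f_deg f_cyc.
have f_kdiff T : f T = kdiff x g T by apply: subr0_eq.
have g_cyc T : B (kdiff x g T) by rewrite -f_kdiff.
have [h [_ [h_deg h_bd]]] := ZB_van g Zg g_deg g_cyc.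
exists (fun S => g S - kdiff x h S); split; last split.
- exact: h_bd.
- by move=> S S_deg; rewrite g_deg // (kdiff_degree h_deg) ?subr0.
- by move=> S; rewrite kdiffB kdiff_kdiff subr0 g_bd.
Qed.

Lemma depth_ge_weaken (V : lmodType R) (A B : V -> Prop) (d d' : int) :
  d' <= d -> depth_ge x A B d -> depth_ge x A B d'.
Proof. by move=> le_d A_depth i lt_i; apply: A_depth; lia. Qed.

Lemma depth_ge_trivial (V : lmodType R) (A : V -> Prop) (d : int) :
  A 0 -> (forall v, A v -> v = 0) -> depth_ge x A (fun v => v = 0) d.
Proof.
move=> A0 A_triv i _ f Af _ _; exists (fun _ => 0).
split=> [//|]; split=> // S.
rewrite (A_triv _ (Af S)) /kdiff big1 ?subr0 // => j _.
exact: scaler0.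
Qed.

Lemma depth_ge_kernel (U V : lmodType R) (L : {linear U -> V}) (Q : V -> Prop) (d : int) :
  (forall u, Q (L u)) -> (forall v, Q v -> exists u, L u = v) ->
  mod_depth_ge U x d -> depth_ge x Q (fun v => v = 0) (d - 1) ->
  depth_ge x (fun u => L u = 0) (fun u => u = 0) d.
Proof.
move=> Q_L L_onto U_depth Q_depth i lt_i.
by apply: koszul_vanish_kernel Q_L L_onto (U_depth _ lt_i) _; apply: Q_depth; lia.
Qed.

Lemma depth_ge_sub (V : lmodType R) (B Z : V -> Prop) (d : int) :
  (forall v, B v -> Z v) ->
  depth_ge x Z (fun v => v = 0) d -> depth_ge x Z B (d - 1) ->
  depth_ge x B (fun v => v = 0) d.
Proof.
move=> BZ Z_depth ZB_depth i lt_i.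
by apply: koszul_vanish_sub BZ (Z_depth _ lt_i) _; apply: ZB_depth; lia.
Qed.

End KoszulComplex.

Section Complexes.
Variables (R : comUnitRingType) (M : int -> lmodType R).
Variable d : forall i : int, {linear M i -> M (i - 1)}.

Lemma castMK (i j : int) (e : i = j) (e' : j = i) (m : M i) :
  castM e' (castM e m) = m.
Proof. by case: j / e e' => e'; rewrite (eq_irrelevance e' erefl). Qed.

Lemma castM0 (i j : int) (e : i = j) : castM e (0 : M i) = 0.
Proof. by case: j / e. Qed.

Lemma castM_d (i j : int) (e : i = j) (e' : i - 1 = j - 1) (m : M i) :
  castM e' (d i m) = d j (castM e m).
Proof. by case: j / e e' => e'; rewrite (eq_irrelevance e' erefl). Qed.

Lemma boundaries0 i : boundaries d i 0.
Proof. by exists 0; rewrite linear0 castM0. Qed.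

Lemma boundaries_d i (m : M i) : boundaries d (i - 1) (d i m).
Proof.
have e : i = i - 1 + 1 by rewrite subrK.
have e' : i - 1 = i - 1 + 1 - 1 by rewrite subrK.
by exists (castM e m); rewrite -(castM_d e e') castMK.
Qed.

Lemma boundaries_dP i (m : M (i - 1)) :
  boundaries d (i - 1) m -> exists y : M i, d i y = m.
Proof.
move=> [y <-]; have e : i - 1 + 1 = i by rewrite subrK.
by exists (castM e y); rewrite -(castM_d e (addrK 1 (i - 1))).
Qed.

Lemma boundaries_cycles i (m : M i) :
  is_complex d -> boundaries d i m -> cycles d i m.
Proof.
move=> d_d [y <-]; have e' : i + 1 - 1 - 1 = i - 1 by rewrite addrK.
by rewrite /cycles -(castM_d (addrK 1 i) e') d_d castM0.
Qed.

End Complexes.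

Lemma int_ind_from (n0 : int) (P : int -> Prop) :
  (forall i, i < n0 -> P i) -> (forall i, P (i - 1) -> P i) -> forall i, P i.
Proof.
move=> P_low P_step.
have P_lt m : forall i, i < n0 + m%:Z -> P i.
  elim: m => [|m IHm] i lt_i; first by apply: P_low; lia.
  by apply: P_step; apply: IHm; lia.
by move=> i; apply: (P_lt `|i - n0|.+1); lia.
Qed.

Theorem lemma3p8 (R : comUnitRingType)
    (HnoethR : noetherian R) (HlocR : local_ring R)
    (n : nat) (x : 'I_n -> R) (Hx : generates_max x)
    (dR : nat) (HdR : ring_depth_eq x dR)
    (M : int -> lmodType R) (d : forall i : int, {linear M i -> M (i - 1)})
    (Hcx : is_complex d) (Hrb : right_bounded M)
    (HMi : forall i : int, @mod_depth_ge R (M i) n x dR%:Z)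
    (HH : forall i : int,
        depth_ge x (cycles d i) (boundaries d i) (dR%:Z - 1)) :
  forall i : int,
    depth_ge x (cycles d i) (fun m : M i => m = 0) dR%:Z /\
    depth_ge x (boundaries d i) (fun m : M i => m = 0) dR%:Z.
Proof.
have [n0 M_low] := Hrb.
have Z_depth i : depth_ge x (boundaries d (i - 1)) (fun m => m = 0) dR%:Z ->
    depth_ge x (cycles d i) (fun m : M i => m = 0) dR%:Z.
  move=> B_depth; apply: depth_ge_kernel (HMi i) _.
  - exact: boundaries_d.
  - exact: boundaries_dP.
  - by apply: depth_ge_weaken B_depth; lia.
have B_depth : forall i, depth_ge x (boundaries d i) (fun m : M i => m = 0) dR%:Z.
  apply: (@int_ind_from n0 (fun i => depth_ge x (boundaries d i) (fun m => m = 0) dR%:Z))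
    => [j lt_j | j B_pred_depth].
    by apply: depth_ge_trivial (boundaries0 d j) _ => m _; apply: M_low.
  apply: depth_ge_sub (HH j) => [m|]; first exact: boundaries_cycles.
  exact: Z_depth.
by move=> i; split; [apply: Z_depth |]; apply: B_depth.
Qed.
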